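(* There exists a Moufang loop $M$ of order $3^{19}$ and elements $c,d\in M$ such that the set $l_{c,d}=\{x\in M \mid (x,c,d)=1\}$ is not a subloop of $M$. More precisely, there are $a,b\in l_{c,d}$ with $[a,b]\notin l_{c,d}$ (where $M$ is generated by $a,b,c,d$).
   Context: A Moufang loop is a loop satisfying the identity $(xy)(zx)=(x(yz))x$. For elements $x,y,z$ of a Moufang loop, $[x,y]$ denotes the unique element $c$ with $xy=(yx)c$, and $(x,y,z)$ denotes the unique element $u$ with $(xy)z=(x(yz))u$. *)

From mathcomp Require Import all_boot.
Set Implicit Arguments. Unset Strict Implicit. Unset Printing Implicit Defensive.

Section Loops.
Variables (T : finType) (mul : T -> T -> T) (one : T).

Definition is_loop : Prop :=
  (forall x, mul one x = x /\ mul x one = x) /\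
  (forall a b, exists! x, mul a x = b) /\
  (forall a b, exists! y, mul y a = b).

Definition is_moufang_loop : Prop :=
  is_loop /\ forall x y z, mul (mul x y) (mul z x) = mul (mul x (mul y z)) x.

Definition lcomm (x y : T) : T :=
  odflt one [pick c | mul x y == mul (mul y x) c].

Definition lassoc (x y z : T) : T :=
  odflt one [pick u | mul (mul x y) z == mul (mul x (mul y z)) u].

Definition is_subloop (S : {set T}) : Prop :=
  one \in S /\
  (forall x y, x \in S -> y \in S -> mul x y \in S) /\
  (forall x y z, x \in S -> y \in S -> mul x z = y -> z \in S) /\
  (forall x y z, x \in S -> y \in S -> mul z x = y -> z \in S).

Definition generates (A : {set T}) : Prop :=
  forall S : {set T}, is_subloop S -> A \subset S -> S = [set: T].

Definition lset (c d : T) : {set T} := [set x | lassoc x c d == one].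

End Loops.

(** The loop lives inside Zorn's split octonions over [Z], whose multiplication
    satisfies the Moufang identity. An injective affine map [u |-> 1 + L u] from
    [Z^8] pulls this product back to a product [u + v + am u v] on [Z^8], with
    [am] bilinear. Writing [L(e)] for the lattice of vectors whose [k]-th
    coordinate is divisible by [3 ^ e_k], the map [am] sends suitable lattices
    into smaller ones; in particular [K = L(4,4,4,3,2,2,0,0)] is a two-sided
    ideal, and the quotient [Z^8 / K], of order [3^19], is a Moufang magma.
    Cancellation holds because [am] strictly descends along a filtration of
    [Z^8] ending at [K], so that [w + am a w] in [K] forces [w] in [K].
    Generation follows from a composition series of lattices from [Z^8] to [K]
    with factors of order 3, each factor being hit by a [3^n]-th power of one of
    a, b, c, d and of the commutators [a,d] and [a,b]. What remains about
    [l_{c,d}] is a finite computation. *)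

From Stdlib Require Import ZArith Lia.
From mathcomp Require Import all_boot zify.

Set Implicit Arguments. Unset Strict Implicit. Unset Printing Implicit Defensive.

Section LoopFacts.
Variables (T : finType) (mul : T -> T -> T) (one : T).

Lemma is_loop_of_injective : (forall x, mul one x = x /\ mul x one = x) ->
  (forall a, injective (mul a)) -> (forall a, injective (mul^~ a)) -> is_loop mul one.
Proof.
move=> mul1 injl injr; split=> //; split=> a b.
  have [f mulK fK] := injF_bij (injl a).
  by exists (f b); split=> [|x <-]; [exact: fK | rewrite mulK].
have [f mulK fK] := injF_bij (injr a).
by exists (f b); split=> [|x <-]; [exact: fK | rewrite mulK].
Qed.

Hypothesis loop_mul : is_loop mul one.

Lemma pick_ldiv (a b c : T) : mul a c = b -> odflt one [pick z | b == mul a z] = c.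
Proof.
move=> abc; have [_ [/(_ a b) [c' [_ eq_c']] _]] := loop_mul.
have {}eq_c z : mul a z = b -> z = c by move=> /eq_c' <-; apply: eq_c'.
by case: pickP => [z /eqP/esym/eq_c | /(_ c)]; rewrite ?abc ?eqxx.
Qed.

Lemma lcomm_eq x y z : mul x y = mul (mul y x) z -> lcomm mul one x y = z.
Proof. by move=> /esym; apply: pick_ldiv. Qed.

Lemma lassoc_eq x y z u : mul (mul x y) z = mul (mul x (mul y z)) u -> lassoc mul one x y z = u.
Proof. by move=> /esym; apply: pick_ldiv. Qed.

Lemma lcommP x y : mul x y = mul (mul y x) (lcomm mul one x y).
Proof.
have [_ [/(_ (mul y x) (mul x y)) [z [yxz _]] _]] := loop_mul.
by rewrite (lcomm_eq (esym yxz)).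
Qed.

Lemma subloop_lcomm S x y : is_subloop mul one S -> x \in S -> y \in S -> lcomm mul one x y \in S.
Proof.
move=> [_ [mulS [ldivS _]]] xS yS.
exact: ldivS (mulS _ _ yS xS) (mulS _ _ xS yS) (esym (lcommP x y)).
Qed.

End LoopFacts.

Local Open Scope Z_scope.

(* Zorn's vector-matrix product [[a u; v b] * [c w; z d]]. *)
Record zorn := Zorn { za : Z; zu1 : Z; zu2 : Z; zu3 : Z; zv1 : Z; zv2 : Z; zv3 : Z; zb : Z }.

Definition zorn_mul (x y : zorn) : zorn :=
  let: Zorn a u1 u2 u3 v1 v2 v3 b := x in
  let: Zorn c w1 w2 w3 z1 z2 z3 d := y in
  Zorn (a * c + (u1 * z1 + u2 * z2 + u3 * z3))
       (a * w1 + d * u1 - (v2 * z3 - v3 * z2))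
       (a * w2 + d * u2 - (v3 * z1 - v1 * z3))
       (a * w3 + d * u3 - (v1 * z2 - v2 * z1))
       (c * v1 + b * z1 + (u2 * w3 - u3 * w2))
       (c * v2 + b * z2 + (u3 * w1 - u1 * w3))
       (c * v3 + b * z3 + (u1 * w2 - u2 * w1))
       (b * d + (v1 * w1 + v2 * w2 + v3 * w3)).

Lemma zorn_mul_moufang x y z :
  zorn_mul (zorn_mul x y) (zorn_mul z x) = zorn_mul (zorn_mul x (zorn_mul y z)) x.
Proof.
by case: x y z => [? ? ? ? ? ? ? ?] [? ? ? ? ? ? ? ?] [? ? ? ? ? ? ? ?] /=; f_equal; ring.
Qed.

Record vec := Vec { x0 : Z; x1 : Z; x2 : Z; x3 : Z; x4 : Z; x5 : Z; x6 : Z; x7 : Z }.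

Definition coord (u : vec) (k : nat) : Z :=
  match k with
  | 0 => x0 u | 1 => x1 u | 2 => x2 u | 3 => x3 u
  | 4 => x4 u | 5 => x5 u | 6 => x6 u | _ => x7 u
  end%N.

Definition addv (u v : vec) : vec :=
  let: Vec u0 u1 u2 u3 u4 u5 u6 u7 := u in let: Vec v0 v1 v2 v3 v4 v5 v6 v7 := v in
  Vec (u0 + v0) (u1 + v1) (u2 + v2) (u3 + v3) (u4 + v4) (u5 + v5) (u6 + v6) (u7 + v7).

Definition subv (u v : vec) : vec :=
  let: Vec u0 u1 u2 u3 u4 u5 u6 u7 := u in let: Vec v0 v1 v2 v3 v4 v5 v6 v7 := v in
  Vec (u0 - v0) (u1 - v1) (u2 - v2) (u3 - v3) (u4 - v4) (u5 - v5) (u6 - v6) (u7 - v7).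

Definition zerov : vec := Vec 0 0 0 0 0 0 0 0.

Record term := Term { coef : Z; lidx : nat; ridx : nat }.
Arguments Term coef%_Z lidx%_nat ridx%_nat.

Definition eval_terms (ts : seq term) (u v : vec) : Z :=
  foldr (fun t s => coef t * coord u (lidx t) * coord v (ridx t) + s) 0 ts.

(* [am u v = L^-1 (L u * L v)], where [to_zorn u = 1 + L u]; see [to_zorn_vmul]. *)
Definition am_table : seq (seq term) :=
  [:: [:: Term 6 0 0; Term (-3) 0 1; Term (-3) 0 3; Term (-18) 0 4; Term (-18) 1 5;
        Term (-729) 1 6; Term (-486) 1 7; Term (-3) 2 0; Term (-18) 2 5; Term 243 2 6;
        Term (-18) 3 5; Term (-729) 4 6; Term 18 5 1; Term 18 5 2; Term 18 5 3;
        Term 729 5 6; Term 243 6 0; Term 729 6 1; Term (-243) 6 2; Term 729 6 4;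
        Term (-729) 6 5; Term 486 7 1];
    [:: Term 3 0 1; Term 3 1 0; Term (-3) 1 1; Term (-3) 1 3; Term (-18) 1 4;
        Term (-9) 1 5; Term (-3) 2 1; Term 9 2 5; Term (-27) 4 5; Term 9 5 1;
        Term (-9) 5 2; Term 27 5 4; Term 243 6 1];
    [:: Term 3 0 0; Term (-3) 0 3; Term (-9) 0 4; Term (-243) 0 6; Term (-243) 0 7;
        Term (-6) 1 1; Term (-6) 1 2; Term (-6) 1 3; Term (-36) 1 5; Term (-2673) 1 6;
        Term (-1458) 1 7; Term (-3) 2 2; Term 486 2 6; Term (-18) 3 5; Term (-243) 3 6;
        Term (-54) 4 5; Term (-2187) 4 6; Term 18 5 1; Term 18 5 2; Term 18 5 3;
        Term 2187 5 6; Term 1458 5 7; Term 486 6 0; Term 2430 6 1; Term (-486) 6 2;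
        Term 1458 6 4; Term (-1458) 6 5; Term 243 7 0; Term 1701 7 1; Term (-243) 7 2;
        Term 729 7 4; Term (-729) 7 5];
    [:: Term (-3) 0 0; Term (-3) 0 1; Term 6 0 2; Term 6 0 3; Term 486 0 6;
        Term 486 0 7; Term 3 1 0; Term 6 1 1; Term 6 1 3; Term 18 1 4; Term 45 1 5;
        Term 3888 1 6; Term 2187 1 7; Term 3 2 1; Term (-9) 2 5; Term (-486) 2 6;
        Term (-243) 2 7; Term 3 3 0; Term (-3) 3 1; Term (-6) 3 2; Term (-3) 3 3;
        Term 18 3 5; Term 486 3 6; Term 9 4 0; Term (-18) 4 1; Term (-18) 4 2;
        Term (-18) 4 3; Term 81 4 5; Term 2916 4 6; Term 729 4 7; Term (-27) 5 1;
        Term (-9) 5 2; Term (-18) 5 3; Term (-27) 5 4; Term (-2916) 5 6;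
        Term (-2187) 5 7; Term (-729) 6 0; Term (-3645) 6 1; Term 729 6 2;
        Term (-2187) 6 4; Term 2187 6 5; Term (-486) 7 0; Term (-2430) 7 1;
        Term 486 7 2; Term (-1458) 7 4; Term 1458 7 5];
    [:: Term 1 0 0; Term (-1) 0 2; Term (-1) 0 3; Term (-81) 0 6; Term (-81) 0 7;
        Term (-2) 1 1; Term (-1) 1 3; Term (-3) 1 4; Term (-9) 1 5; Term (-729) 1 6;
        Term (-405) 1 7; Term (-1) 2 0; Term (-1) 2 1; Term (-3) 2 5; Term 81 2 6;
        Term (-1) 3 1; Term 1 3 2; Term (-3) 3 4; Term (-6) 3 5; Term (-81) 3 6;
        Term 3 4 0; Term 3 4 2; Term (-18) 4 4; Term (-9) 4 5; Term (-486) 4 6;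
        Term 3 5 1; Term 9 5 2; Term 6 5 3; Term (-9) 5 4; Term 729 5 6; Term 486 5 7;
        Term 162 6 0; Term 648 6 1; Term (-162) 6 2; Term 486 6 4; Term (-486) 6 5;
        Term 81 7 0; Term 486 7 1; Term (-81) 7 2; Term 243 7 4; Term (-243) 7 5];
    [:: Term 1 0 1; Term 3 0 5; Term (-1) 1 0; Term (-3) 1 5; Term (-81) 1 6;
        Term (-81) 1 7; Term (-3) 3 5; Term (-18) 4 5; Term 3 5 0; Term (-3) 5 2;
        Term 243 5 6; Term 81 6 1; Term 81 7 1];
    [:: Term (-3) 0 7; Term (-21) 1 6; Term (-12) 1 7; Term (-3) 3 6; Term (-18) 4 6;
        Term 18 5 6; Term 18 5 7; Term 6 6 0; Term 18 6 1; Term (-3) 6 2;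
        Term (-18) 6 5; Term 243 6 6; Term 3 7 0; Term 12 7 1; Term (-18) 7 5];
    [:: Term 3 0 6; Term 6 0 7; Term 30 1 6; Term 18 1 7; Term (-6) 2 6; Term (-3) 2 7;
        Term 3 3 6; Term 27 4 6; Term (-18) 5 6; Term (-18) 5 7; Term (-3) 6 0;
        Term (-30) 6 1; Term 6 6 2; Term (-3) 6 3; Term (-27) 6 4; Term 18 6 5;
        Term 243 6 7; Term (-21) 7 1; Term (-3) 7 3; Term (-18) 7 4; Term 18 7 5]].

Definition am (u v : vec) : vec :=
  let e k := eval_terms (nth [::] am_table k) u v in
  Vec (e 0%N) (e 1%N) (e 2%N) (e 3%N) (e 4%N) (e 5%N) (e 6%N) (e 7%N).

Definition vmul (u v : vec) : vec := addv (addv u v) (am u v).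

Definition to_zorn (u : vec) : zorn :=
  let: Vec u0 u1 u2 u3 u4 u5 u6 u7 := u in
  Zorn (1 + 3 * u0 - 9 * u4 - 9 * u5 + 243 * u6)
       (- 3 * u0 + 3 * u2 - 9 * u4 + 9 * u5)
       (3 * u0 - 3 * u1 - 3 * u3 - 9 * u4 + 243 * u7)
       (- 3 * u1)
       (3 * u1 - 9 * u5)
       (- 3 * u1 + 3 * u2 - 9 * u4 - 9 * u5)
       (- 3 * u0 - 3 * u1 - 3 * u2 - 3 * u3 - 9 * u5)
       (1 + 3 * u0 - 3 * u1 - 3 * u2 - 3 * u3 - 9 * u4 + 9 * u5).

Ltac vec_ring := cbv -[Z.add Z.mul Z.sub Z.opp]; f_equal; ring.

Lemma to_zorn_vmul u v : to_zorn (vmul u v) = zorn_mul (to_zorn u) (to_zorn v).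
Proof. by case: u v => [? ? ? ? ? ? ? ?] [? ? ? ? ? ? ? ?]; vec_ring. Qed.

Lemma to_zorn_inj : injective to_zorn.
Proof.
case=> [? ? ? ? ? ? ? ?] [? ? ? ? ? ? ? ?] E.
move: (congr1 za E) (congr1 zu1 E) (congr1 zu2 E) (congr1 zu3 E)
      (congr1 zv1 E) (congr1 zv2 E) (congr1 zv3 E) (congr1 zb E).
cbv -[Z.add Z.mul Z.sub Z.opp] => *; f_equal; lia.
Qed.

Lemma vmul_moufang x y z : vmul (vmul x y) (vmul z x) = vmul (vmul x (vmul y z)) x.
Proof. by apply: to_zorn_inj; rewrite !to_zorn_vmul zorn_mul_moufang. Qed.

Lemma addvK u v : subv (addv u v) v = u.
Proof. by case: u v => [? ? ? ? ? ? ? ?] [? ? ? ? ? ? ? ?]; vec_ring. Qed.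

Lemma subvK u v : addv (subv u v) v = u.
Proof. by case: u v => [? ? ? ? ? ? ? ?] [? ? ? ? ? ? ? ?]; vec_ring. Qed.

Lemma coord_addv u v k : coord (addv u v) k = coord u k + coord v k.
Proof. by case: u v => [? ? ? ? ? ? ? ?] [? ? ? ? ? ? ? ?]; do 8?[case: k => [|k] //]. Qed.

Lemma coord_subv u v k : coord (subv u v) k = coord u k - coord v k.
Proof. by case: u v => [? ? ? ? ? ? ? ?] [? ? ? ? ? ? ? ?]; do 8?[case: k => [|k] //]. Qed.

Lemma vmul_subl a x y : subv (vmul a x) (vmul a y) = addv (subv x y) (am a (subv x y)).
Proof. by case: a x y => [? ? ? ? ? ? ? ?] [? ? ? ? ? ? ? ?] [? ? ? ? ? ? ? ?]; vec_ring. Qed.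

Lemma vmul_subr a x y : subv (vmul x a) (vmul y a) = addv (subv x y) (am (subv x y) a).
Proof. by case: a x y => [? ? ? ? ? ? ? ?] [? ? ? ? ? ? ? ?] [? ? ? ? ? ? ? ?]; vec_ring. Qed.

Lemma vmul_sub u u' v v' : subv (vmul u v) (vmul u' v') =
  addv (addv (subv u u') (subv v v')) (addv (am (subv u u') v) (am u' (subv v v'))).
Proof.
case: u u' v v' => [? ? ? ? ? ? ? ?] [? ? ? ? ? ? ? ?] [? ? ? ? ? ? ? ?] [? ? ? ? ? ? ? ?].
by vec_ring.
Qed.

Lemma vmul_ldiv g u x : subv u (subv x g) = subv (subv (vmul g u) x) (am g u).
Proof. by case: g u x => [? ? ? ? ? ? ? ?] [? ? ? ? ? ? ? ?] [? ? ? ? ? ? ? ?]; vec_ring. Qed.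

Definition lat_mod (e : seq nat) (k : nat) : Z := 3 ^ Z.of_nat (nth 0%N e k).

Definition inlat (e : seq nat) (u : vec) : Prop :=
  forall k, (k < 8)%N -> (lat_mod e k | coord u k).

Definition inlatb (e : seq nat) (u : vec) : bool :=
  all (fun k => coord u k mod lat_mod e k =? 0) (iota 0 8).

Definition lat_le (e f : seq nat) : bool := all (fun k => nth 0 e k <= nth 0 f k)%N (iota 0 8).

Lemma lat_mod_gt0 e k : 0 < lat_mod e k.
Proof. apply: Z.pow_pos_nonneg; lia. Qed.

Lemma dvd_of_mod (m z : Z) : 0 < m -> z mod m =? 0 -> (m | z).
Proof. by move=> m_gt0 /Z.eqb_eq; apply: (proj1 (Z.mod_divide _ _ _)); lia. Qed.

Lemma inlatP e u : reflect (inlat e u) (inlatb e u).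
Proof.
apply: (iffP allP) => [He k k_lt | He k].
  by apply: dvd_of_mod (lat_mod_gt0 e k) _; apply: He; rewrite mem_iota.
rewrite mem_iota => /andP[_ /He]; have := lat_mod_gt0 e k.
by move=> m_gt0 /(Z.mod_divide _ _ (Z.neq_sym _ _ (Z.lt_neq _ _ m_gt0))) ->.
Qed.

Lemma inlat_nil u : inlat [::] u.
Proof. move=> k _; rewrite /lat_mod nth_nil; exact: Z.divide_1_l. Qed.

Lemma inlat_addv e u v : inlat e u -> inlat e v -> inlat e (addv u v).
Proof.
by move=> Hu Hv k k_lt; rewrite coord_addv; apply: Z.divide_add_r; [apply: Hu | apply: Hv].
Qed.

Lemma inlat_subv e u v : inlat e u -> inlat e v -> inlat e (subv u v).
Proof.
by move=> Hu Hv k k_lt; rewrite coord_subv; apply: Z.divide_sub_r; [apply: Hu | apply: Hv].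
Qed.

Lemma lat_mod_dvd e f k : (nth 0 e k <= nth 0 f k)%N -> (lat_mod e k | lat_mod f k).
Proof.
move=> /leP le_ef; exists (3 ^ (Z.of_nat (nth 0%N f k) - Z.of_nat (nth 0%N e k))).
by rewrite /lat_mod -Z.pow_add_r; [congr (_ ^ _) | |]; lia.
Qed.

Lemma inlat_le e f u : lat_le e f -> inlat f u -> inlat e u.
Proof.
move=> /allP le_ef Hu k k_lt; apply: Z.divide_trans (Hu k k_lt).
by apply/lat_mod_dvd/le_ef; rewrite mem_iota.
Qed.

Lemma lat_mod_incr e c k :
  lat_mod (incr_nth e c) k = if c == k then 3 * lat_mod e k else lat_mod e k.
Proof.
rewrite /lat_mod nth_incr_nth; case: eqP => // _.
by rewrite -[(true + _)%N]/(_.+1) Nat2Z.inj_succ Z.pow_succ_r; lia.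
Qed.

Lemma lat_le_incr e c : lat_le e (incr_nth e c).
Proof. by apply/allP => k _; rewrite nth_incr_nth leq_addl. Qed.

Lemma inlat_incr e c w : inlat e w -> (3 * lat_mod e c | coord w c) -> inlat (incr_nth e c) w.
Proof. by move=> w_e w_c k k_lt; rewrite lat_mod_incr; case: eqP => [<- | _]; last apply: w_e. Qed.

Definition am_maps (e1 e2 e3 : seq nat) : bool :=
  all (fun k => all (fun t => [&& (lidx t < 8)%N, (ridx t < 8)%N &
         coef t * lat_mod e1 (lidx t) * lat_mod e2 (ridx t) mod lat_mod e3 k =? 0])
       (nth [::] am_table k))
    (iota 0 8).

Lemma dvd_eval_terms (n : Z) e1 e2 ts u v : 0 < n -> inlat e1 u -> inlat e2 v ->
  all (fun t => [&& (lidx t < 8)%N, (ridx t < 8)%N &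
         coef t * lat_mod e1 (lidx t) * lat_mod e2 (ridx t) mod n =? 0]) ts ->
  (n | eval_terms ts u v).
Proof.
move=> n_gt0 Hu Hv; elim: ts => [|[c i j] ts IHts] /=; first by move=> _; apply: Z.divide_0_r.
case/andP=> /and3P [/Hu [p Hp] /Hv [q Hq] /(dvd_of_mod n_gt0) [r Hr]] /IHts.
apply: Z.divide_add_r; rewrite Hp Hq; exists (r * p * q).
by transitivity (p * q * (c * lat_mod e1 i * lat_mod e2 j)); [ring | rewrite Hr; ring].
Qed.

Lemma am_maps_inlat e1 e2 e3 u v :
  am_maps e1 e2 e3 -> inlat e1 u -> inlat e2 v -> inlat e3 (am u v).
Proof.
move=> /allP He Hu Hv k k_lt.
have -> : coord (am u v) k = eval_terms (nth [::] am_table k) u v.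
  by move: k_lt; do 8?[case: k => [|k] //].
by apply: dvd_eval_terms (lat_mod_gt0 e3 k) Hu Hv _; apply: He; rewrite mem_iota.
Qed.

(* [nth] defaults to exponent 0, so coordinates 6 and 7 are unconstrained: the
   quotient [M] by [L(Kexp)] forgets them. *)
Definition Kexp : seq nat := [:: 4; 4; 4; 3; 2; 2]%N.

Definition M := ('I_(3 ^ 4) * 'I_(3 ^ 4) * 'I_(3 ^ 4) * 'I_(3 ^ 3) * 'I_(3 ^ 2) * 'I_(3 ^ 2))%type.

Definition reduce (k : nat) (z : Z) : 'I_(3 ^ k) :=
  Ordinal (ltn_pmod (Z.to_nat (z mod 3 ^ Z.of_nat k)) (expn_gt0 3 k)).

Definition of_vec (u : vec) : M :=
  (reduce 4 (x0 u), reduce 4 (x1 u), reduce 4 (x2 u),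
   reduce 3 (x3 u), reduce 2 (x4 u), reduce 2 (x5 u)).

Definition to_vec (x : M) : vec :=
  let: (y0, y1, y2, y3, y4, y5) := x in
  Vec (Z.of_nat y0) (Z.of_nat y1) (Z.of_nat y2) (Z.of_nat y3) (Z.of_nat y4) (Z.of_nat y5) 0 0.

Lemma val_reduce k z : Z.of_nat (reduce k z) = z mod 3 ^ Z.of_nat k.
Proof.
have bnd := Z.mod_pos_bound z (3 ^ Z.of_nat k) ltac:(apply: Z.pow_pos_nonneg; lia).
by rewrite /= modn_small; [rewrite Z2Nat.id |]; lia.
Qed.

Lemma reduce_val k (y : 'I_(3 ^ k)) : reduce k (Z.of_nat y) = y.
Proof.
apply: val_inj; apply: Nat2Z.inj; rewrite val_reduce Z.mod_small //.
have := ltn_ord y; lia.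
Qed.

Lemma eqmod_dvd (N z w : Z) : 0 < N -> z mod N = w mod N <-> (N | z - w).
Proof.
move=> N_gt0; split=> [E | [q E]].
  by apply/(Z.mod_divide _ _ _); [lia | rewrite Zminus_mod E Z.sub_diag].
by rewrite (_ : z = w + q * N) ?Z.mod_add; lia.
Qed.

Lemma reduce_eq k z w : reduce k z = reduce k w <-> (3 ^ Z.of_nat k | z - w).
Proof.
rewrite -eqmod_dvd; last by apply: Z.pow_pos_nonneg; lia.
by rewrite -!val_reduce; split=> [-> // | /Nat2Z.inj E]; apply: val_inj.
Qed.

Lemma of_vec_eq u v : of_vec u = of_vec v <-> inlat Kexp (subv u v).
Proof.
split=> [/eqP | H].
  rewrite !xpair_eqE => /andP[/andP[/andP[/andP[/andP[/eqP/reduce_eq E0 /eqP/reduce_eq E1]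
    /eqP/reduce_eq E2] /eqP/reduce_eq E3] /eqP/reduce_eq E4] /eqP/reduce_eq E5].
  move=> k _; rewrite coord_subv.
  by do 6?[case: k => [|k] //]; rewrite /lat_mod nth_default //; apply: Z.divide_1_l.
have Hk k : (k < 8)%N -> (lat_mod Kexp k | coord u k - coord v k).
  by rewrite -coord_subv; apply: H.
by congr (_, _, _, _, _, _); apply/reduce_eq;
  [apply: (Hk 0%N) | apply: (Hk 1%N) | apply: (Hk 2%N) |
   apply: (Hk 3%N) | apply: (Hk 4%N) | apply: (Hk 5%N)].
Qed.

Lemma of_vecK : cancel to_vec of_vec.
Proof. by case=> [[[[[y0 y1] y2] y3] y4] y5]; rewrite /of_vec /= !reduce_val. Qed.

Lemma to_vecK u : inlat Kexp (subv u (to_vec (of_vec u))).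
Proof. by apply/of_vec_eq; rewrite of_vecK. Qed.

Lemma vmul_congr u u' v v' : inlat Kexp (subv u u') -> inlat Kexp (subv v v') ->
  inlat Kexp (subv (vmul u v) (vmul u' v')).
Proof.
move=> Hu Hv; rewrite vmul_sub.
apply/inlat_addv/inlat_addv; [exact: inlat_addv | |].
  by apply: am_maps_inlat Hu (inlat_nil v); vm_compute.
by apply: am_maps_inlat (inlat_nil u') Hv; vm_compute.
Qed.

Definition mulM (x y : M) : M := of_vec (vmul (to_vec x) (to_vec y)).
Definition oneM : M := of_vec zerov.

Lemma of_vec_vmul u v : of_vec (vmul u v) = mulM (of_vec u) (of_vec v).
Proof. by apply/of_vec_eq; apply: vmul_congr; apply: to_vecK. Qed.

Lemma mulM_moufang x y z : mulM (mulM x y) (mulM z x) = mulM (mulM x (mulM y z)) x.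
Proof. by rewrite -[x]of_vecK -[y]of_vecK -[z]of_vecK -!of_vec_vmul vmul_moufang. Qed.

Lemma mul1M x : mulM oneM x = x.
Proof.
rewrite -[x]of_vecK -of_vec_vmul; congr of_vec.
by case: (to_vec x) => [? ? ? ? ? ? ? ?]; vec_ring.
Qed.

Lemma mulM1 x : mulM x oneM = x.
Proof.
rewrite -[x]of_vecK -of_vec_vmul; congr of_vec.
by case: (to_vec x) => [? ? ? ? ? ? ? ?]; vec_ring.
Qed.

Lemma inlat_K_one x : inlat Kexp (to_vec x) -> x = oneM.
Proof.
move=> x_K; rewrite -[x]of_vecK; apply/of_vec_eq.
by rewrite (_ : subv _ _ = to_vec x) //; case: (to_vec x) => [? ? ? ? ? ? ? ?]; vec_ring.
Qed.

Definition am_descends (e e' : seq nat) : bool :=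
  [&& am_maps [::] e e', am_maps e [::] e' & lat_le e' Kexp].

Lemma inlat_descends_path (f : vec -> vec) e es w :
  (forall e e' w, am_descends e e' -> inlat e w -> inlat e' (f w)) ->
  path am_descends e es -> inlat e w -> inlat Kexp (addv w (f w)) -> inlat (last e es) w.
Proof.
move=> f_step; elim: es e => [|e' es IHes] e //= /andP[step_ee' path_es] w_e wfw_K.
have /and3P[_ _ le_e'K] := step_ee'.
have w_e' : inlat e' w.
  rewrite -(addvK w (f w)).
  exact: inlat_subv (inlat_le le_e'K wfw_K) (f_step _ _ _ step_ee' w_e).
exact: IHes path_es w_e' wfw_K.
Qed.

Definition filtration : seq (seq nat) :=
  [:: [:: 1; 1; 1; 1]; [:: 2; 2; 2; 2; 1; 1]; [:: 3; 3; 3; 3; 2; 2]; Kexp]%N.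

Lemma inlat_cancel (f : vec -> vec) w :
  (forall e e' w, am_descends e e' -> inlat e w -> inlat e' (f w)) ->
  inlat Kexp (addv w (f w)) -> inlat Kexp w.
Proof.
move=> f_step wfw_K.
by apply: (inlat_descends_path (es := filtration) f_step _ (inlat_nil w) wfw_K); vm_compute.
Qed.

Lemma mulM_injl a : injective (mulM a).
Proof.
move=> x y /of_vec_eq; rewrite vmul_subl => axy.
rewrite -[x]of_vecK -[y]of_vecK; apply/of_vec_eq; apply: (inlat_cancel (f := am (to_vec a))) axy.
by move=> e e' w /and3P[am_e _ _]; apply: am_maps_inlat am_e (inlat_nil _).
Qed.

Lemma mulM_injr a : injective (mulM^~ a).
Proof.
move=> x y /of_vec_eq; rewrite vmul_subr => xya.
rewrite -[x]of_vecK -[y]of_vecK; apply/of_vec_eq; apply: (inlat_cancel (f := am^~ (to_vec a))) xya.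
by move=> e e' w /and3P[_ am_e _] w_e; apply: am_maps_inlat am_e w_e (inlat_nil _).
Qed.

Lemma M_loop : is_loop mulM oneM.
Proof. by apply: is_loop_of_injective mulM_injl mulM_injr => x; rewrite mul1M mulM1. Qed.

Lemma M_moufang : is_moufang_loop mulM oneM.
Proof. exact: conj M_loop mulM_moufang. Qed.

Lemma dvd3_multiple (x g : Z) : ~ (3 | g) -> exists n : nat, (3 | x - Z.of_nat n * g).
Proof.
move=> g_ndvd.
have g_mod : g mod 3 = 1 \/ g mod 3 = 2.
  have := Z.mod_pos_bound g 3 ltac:(lia).
  have : g mod 3 <> 0 by move=> /(Z.mod_divide g 3 ltac:(lia)).
  lia.
have x_mod : x mod 3 = 0 \/ x mod 3 = 1 \/ x mod 3 = 2.
  have := Z.mod_pos_bound x 3 ltac:(lia); lia.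
suff [n Hn] : exists n : nat, (x - Z.of_nat n * g) mod 3 = 0.
  by exists n; apply/(Z.mod_divide _ 3 ltac:(lia)).
case: g_mod x_mod => g_m [x_m | [x_m | x_m]];
  [exists 0%N | exists 1%N | exists 2%N | exists 0%N | exists 2%N | exists 1%N];
  by rewrite Zminus_mod Zmult_mod x_m g_m.
Qed.

Lemma ldiv_level e c g u : (c < 8)%N -> am_maps e [::] (incr_nth e c) ->
    lat_le (incr_nth e c) Kexp -> inlat e (to_vec g) -> inlat e (to_vec (mulM g u)) ->
  inlat e (to_vec u) /\
  (3 * lat_mod e c | coord (to_vec u) c - (coord (to_vec (mulM g u)) c - coord (to_vec g) c)).
Proof.
move=> c_lt am_e le_K g_e x_e.
have D : inlat (incr_nth e c) (subv (to_vec u) (subv (to_vec (mulM g u)) (to_vec g))).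
  rewrite vmul_ldiv; apply: inlat_subv; first exact: inlat_le le_K (to_vecK _).
  exact: am_maps_inlat am_e g_e (inlat_nil _).
split; last by have := D c c_lt; rewrite lat_mod_incr eqxx !coord_subv.
rewrite -(subvK (to_vec u) (subv (to_vec (mulM g u)) (to_vec g))).
exact: inlat_addv (inlat_le (lat_le_incr e c) D) (inlat_subv x_e g_e).
Qed.

(* Left division by [g] lowers the [c]-th coordinate by that of [g] modulo
   [L(incr_nth e c)]; as [g] is nonzero in the factor of order 3, at most two
   left divisions by [g] reach [L(incr_nth e c)]. *)
Lemma level_step S e c g : (c < 8)%N -> is_subloop mulM oneM S -> g \in S ->
    inlat e (to_vec g) -> ~ (3 * lat_mod e c | coord (to_vec g) c) ->
    am_descends e (incr_nth e c) ->
    (forall x, inlat (incr_nth e c) (to_vec x) -> x \in S) ->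
  forall x, inlat e (to_vec x) -> x \in S.
Proof.
move=> c_lt [_ [mulS _]] gS g_e g_c /and3P[_ am_e le_K] next.
suff level_n n x : inlat e (to_vec x) ->
    (3 * lat_mod e c | coord (to_vec x) c - Z.of_nat n * coord (to_vec g) c) -> x \in S.
  move=> x x_e; have [p Hp] := g_e c c_lt; have [q Hq] := x_e c c_lt.
  have p_ndvd : ~ (3 | p) by move=> [r Hr]; apply: g_c; exists r; rewrite Hp Hr; ring.
  have [n Hn] := dvd3_multiple q p_ndvd.
  apply: (level_n n x x_e); rewrite Hp Hq.
  rewrite (_ : _ - _ = (q - Z.of_nat n * p) * lat_mod e c); last ring.
  exact: Z.mul_divide_mono_r.
elim: n x => [|n IHn] x x_e x_c.
  by apply/next/inlat_incr; move: x_c; rewrite Z.mul_0_l Z.sub_0_r.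
have [_ [/(_ g x) [u [gu _]] _]] := M_loop; subst x.
have [u_e u_c] := ldiv_level c_lt am_e le_K g_e x_e.
apply: mulS gS (IHn u u_e _); move: x_c u_c; rewrite Nat2Z.inj_succ.
set X := coord (to_vec (mulM g u)) c; set U := coord (to_vec u) c.
set G := coord (to_vec g) c => x_c u_c.
rewrite (_ : U - _ = U - (X - G) + (X - Z.succ (Z.of_nat n) * G)); last ring.
exact: Z.divide_add_r.
Qed.

Fixpoint schedule_ok (e : seq nat) (s : seq (nat * M)) : bool :=
  if s is (c, g) :: s' then
    [&& (c < 8)%N, inlatb e (to_vec g), ~~ (coord (to_vec g) c mod (3 * lat_mod e c) =? 0),
        am_descends e (incr_nth e c) & schedule_ok (incr_nth e c) s']
  else lat_le Kexp e.

Lemma schedule_sub S e s : is_subloop mulM oneM S -> schedule_ok e s ->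
  {subset [seq p.2 | p <- s] <= S} -> forall x, inlat e (to_vec x) -> x \in S.
Proof.
move=> subS; elim: s e => [|[c g] s IHs] e /=.
  by move=> le_K _ x /(inlat_le le_K)/inlat_K_one ->; case: subS.
case/and5P=> c_lt /inlatP g_e g_c step ok_s sub_s.
apply: level_step c_lt subS _ g_e _ step _.
- by apply: sub_s; rewrite inE eqxx.
- have m3_neq0 : 3 * lat_mod e c <> 0 by have := lat_mod_gt0 e c; lia.
  by move=> /(Z.mod_divide _ _ m3_neq0) /Z.eqb_eq; apply/negP.
by apply: IHs ok_s _ => y y_s; apply: sub_s; rewrite inE y_s orbT.
Qed.

Definition ea : M := of_vec (Vec 1 0 0 0 0 0 0 0).
Definition eb : M := of_vec (Vec 0 1 0 0 0 0 0 0).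
Definition ec : M := of_vec (Vec 0 0 1 0 0 0 0 0).
Definition ed : M := of_vec (Vec 0 0 0 1 0 0 0 0).

Lemma lcomm_ad : lcomm mulM oneM ea ed = of_vec (Vec 60 0 60 21 2 0 0 0).
Proof. by apply: (lcomm_eq M_loop); vm_compute. Qed.

Lemma lcomm_ab : lcomm mulM oneM ea eb = of_vec (Vec 6 9 54 3 0 8 0 0).
Proof. by apply: (lcomm_eq M_loop); vm_compute. Qed.

Definition gen (i : nat) : M :=
  match i with
  | 0 => ea | 1 => eb | 2 => ec | 3 => ed
  | 4 => of_vec (Vec 60 0 60 21 2 0 0 0)
  | _ => of_vec (Vec 6 9 54 3 0 8 0 0)
  end%N.

Definition cubeM (x : M) : M := mulM x (mulM x x).

(* The step raising the modulus of coordinate [i] from [3^n] to [3^(n+1)] uses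
   the [3^n]-th power of [gen i]. *)
Definition schedule : seq (nat * M) :=
  [seq (ni.2, iter ni.1 cubeM (gen ni.2)) |
     ni <- [seq (n, i) | n <- iota 0 4, i <- iota 0 6] & (ni.1 < nth 0 Kexp ni.2)%N].

Lemma schedule_okE : schedule_ok [::] schedule.
Proof. by vm_compute. Qed.

Lemma M_generated : generates mulM oneM [set ea; eb; ec; ed].
Proof.
move=> S subS /subsetP abcdS; apply/setP=> x; rewrite inE.
have [_ [mulS _]] := subS.
have lcommS := subloop_lcomm M_loop subS.
have genS i : gen i \in S.
  case: i => [|[|[|[|[|i]]]]]; try by apply: abcdS; rewrite !inE eqxx ?orbT.
    have -> : gen 4 = lcomm mulM oneM ea ed by rewrite lcomm_ad.
    by apply: lcommS; apply: abcdS; rewrite !inE eqxx ?orbT.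
  have -> : gen i.+4.+1 = lcomm mulM oneM ea eb by rewrite lcomm_ab.
  by apply: lcommS; apply: abcdS; rewrite !inE eqxx ?orbT.
have iterS n y : y \in S -> iter n cubeM y \in S.
  by move=> yS; elim: n => // n IHn; apply: mulS IHn (mulS _ _ IHn IHn).
apply: (schedule_sub subS schedule_okE _ (inlat_nil _)).
by move=> _ /mapP[_ /mapP[ni _ ->] ->]; apply/iterS/genS.
Qed.

Lemma ea_lset : ea \in lset mulM oneM ec ed.
Proof. by rewrite inE (lassoc_eq M_loop (u := oneM)); vm_compute. Qed.

Lemma eb_lset : eb \in lset mulM oneM ec ed.
Proof. by rewrite inE (lassoc_eq M_loop (u := oneM)); vm_compute. Qed.

Lemma lcomm_ab_lset : lcomm mulM oneM ea eb \notin lset mulM oneM ec ed.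
Proof.
by rewrite lcomm_ab inE (lassoc_eq M_loop (u := of_vec (Vec 27 54 54 0 0 0 0 0))); vm_compute.
Qed.

Local Close Scope Z_scope.

Theorem mainTheorem3 :
  exists (T : finType) (mul : T -> T -> T) (one : T),
    is_moufang_loop mul one /\ #|T| = 3 ^ 19 /\
    exists a b c d : T,
      generates mul one [set a; b; c; d] /\
      ~ is_subloop mul one (lset mul one c d) /\
      a \in lset mul one c d /\ b \in lset mul one c d /\
      lcomm mul one a b \notin lset mul one c d.
Proof.
exists M, mulM, oneM; split; first exact: M_moufang.
split; first by rewrite /M !card_prod !card_ord -[3 ^ 19]/(3 ^ (4 + 4 + 4 + 3 + 2 + 2)) !expnD.
exists ea, eb, ec, ed; split; first exact: M_generated.
split; last by split; [exact: ea_lset | split; [exact: eb_lset | exact: lcomm_ab_lset]].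
move=> subL; move: lcomm_ab_lset.
by rewrite (subloop_lcomm M_loop subL ea_lset eb_lset).
Qed.
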